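(* Let $\mathbf{A}$ be an additive category equipped with an f.p. promonoidal structure $(T, \mathrm{Ass}, 1, \lambda, \varrho)$, let $\otimes := \widehat{T}$ and let $(\otimes, \widehat{\mathrm{Ass}}, 1, \widehat\lambda, \widehat\varrho)$ be the induced monoidal structure on $\mathcal{A}(\mathbf{A})$. Let $\mathrm{Br}_{a,b}: a\otimes b\xrightarrow{\sim} b\otimes a$ be an isomorphism natural in $a,b\in\mathbf{A}$ with extension $\widehat{\mathrm{Br}}$. Then $\widehat{\mathrm{Br}}$ defines a braiding for this monoidal structure, i.e. for all $A,B,C \in\mathcal{A}(\mathbf{A})$: (i) $\widehat\lambda_A \circ \widehat{\mathrm{Br}}_{A,1} = \widehat\varrho_A$; (ii) $(\widehat{\mathrm{Br}}_{C,A}\otimes\mathrm{id}_B)\circ\widehat{\mathrm{Ass}}_{C,A,B}\circ\widehat{\mathrm{Br}}_{A\otimes B, C} = \widehat{\mathrm{Ass}}_{A,C,B}\circ(\mathrm{id}_A\otimes\widehat{\mathrm{Br}}_{B,C})\circ\widehat{\mathrm{Ass}}^{-1}_{A,B,C}$; (iii) $(\mathrm{id}_B\otimes\widehat{\mathrm{Br}}_{C,A})\circ\widehat{\mathrm{Ass}}^{-1}_{B,C,A}\circ\widehat{\mathrm{Br}}_{A,B\otimes C} = \widehat{\mathrm{Ass}}^{-1}_{B,A,C}\circ(\widehat{\mathrm{Br}}_{A,B}\otimes\mathrm{id}_C)\circ\widehat{\mathrm{Ass}}_{A,B,C}$, if and only if the identities (i), (ii), (iii) hold for all $A,B,C \in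 \mathbf{A}$. Moreover, $\widehat{\mathrm{Br}}$ is symmetric (i.e. $\widehat{\mathrm{Br}}_{A,B} = \widehat{\mathrm{Br}}_{B,A}^{-1}$ for all $A,B\in\mathcal{A}(\mathbf{A})$) if and only if $\mathrm{Br}_{b,a}\circ\mathrm{Br}_{a,b} = \mathrm{id}_{a\otimes b}$ for all $a,b\in\mathbf{A}$.
   Context: The Freyd category $\mathcal{A}(\mathbf{A})$: objects are morphisms $\rho_a: r_a \to a$ of $\mathbf{A}$, written $(a \xleftarrow{\rho_a} r_a)$; morphisms $(a \xleftarrow{\rho_a} r_a) \to (b \xleftarrow{\rho_b} r_b)$ are morphisms $\alpha: a\to b$ of $\mathbf{A}$ with $\alpha\circ\rho_a = \rho_b\circ\omega$ for some $\omega$, modulo those of the form $\rho_b\circ\lambda$; it is additive with cokernels. Objects $a\in\mathbf{A}$ are regarded as $(a\leftarrow0)$ via the embedding $\mathrm{emb}$. For a multilinear (componentwise additive) $F: \prod_i\mathbf{A}_i\to\mathbf{B}$ into an additive category with cokernels, $\widehat F(A_1,\dots,A_n) = \operatorname{cok}\big(\bigoplus_j F(a_1,\dots,r_{a_j},\dots,a_n)\to F(a_1,\dots,a_n)\big)$ defines the right exact multilinear extension with $\widehat F\circ\mathrm{emb}\cong F$; restriction along $\mathrm{emb}$ is an equivalence between right exact multilinear functors on $\prod_i\mathcal{A}(\mathbf{A}_i)$ and multilinear functors on $\prod_i\mathbf{A}_i$, and the extension $\widehat\nu$ of a natural transformation $\nu$ between restrictions is the unique natural transformation between the right exact functors restricting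 to $\nu$. An f.p. promonoidal structure on $\mathbf{A}$ consists of a bilinear functor $T:\mathbf{A}\times\mathbf{A}\to\mathcal{A}(\mathbf{A})$, an isomorphism $\mathrm{Ass}_{a,b,c}: a\otimes(b\otimes c)\xrightarrow{\sim}(a\otimes b)\otimes c$ natural in $a,b,c\in\mathbf{A}$, an object $1\in\mathcal{A}(\mathbf{A})$, isomorphisms $\lambda_a: 1\otimes a\xrightarrow{\sim} a$, $\varrho_a: a\otimes 1\xrightarrow{\sim} a$ natural in $a\in\mathbf{A}$, such that the pentagon identity $\widehat{\mathrm{Ass}}_{a\otimes b,c,d}\circ\widehat{\mathrm{Ass}}_{a,b,c\otimes d} = (\widehat{\mathrm{Ass}}_{a,b,c}\otimes\mathrm{id}_d)\circ\widehat{\mathrm{Ass}}_{a,b\otimes c,d}\circ(\mathrm{id}_a\otimes\widehat{\mathrm{Ass}}_{b,c,d})$ and the triangle identity $(\widehat\varrho_a\otimes\mathrm{id}_b)\circ\widehat{\mathrm{Ass}}_{a,1,b} = \mathrm{id}_a\otimes\widehat\lambda_b$ hold for all $a,b,c,d\in\mathbf{A}$; then $(\otimes, \widehat{\mathrm{Ass}}, 1, \widehat\lambda,\widehat\varrho)$ is a monoidal structure on $\mathcal{A}(\mathbf{A})$. *)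

From HB Require Import structures.
From mathcomp Require Import all_boot all_algebra.
Set Implicit Arguments. Unset Strict Implicit. Unset Printing Implicit Defensive.
Import GRing.Theory.
Local Open Scope ring_scope.

Record addcat := AddCat {
  Ob : Type;
  Hom : Ob -> Ob -> zmodType;
  cmp : forall a b c : Ob, Hom b c -> Hom a b -> Hom a c;
  idm : forall a : Ob, Hom a a;
  compA : forall a b c d (h : Hom c d) (g : Hom b c) (f : Hom a b),
    cmp h (cmp g f) = cmp (cmp h g) f;
  comp1m : forall a b (f : Hom a b), cmp (idm b) f = f;
  compm1 : forall a b (f : Hom a b), cmp f (idm a) = f;
  compDl : forall a b c (g g' : Hom b c) (f : Hom a b),
    cmp (g + g') f = cmp g f + cmp g' f;
  compDr : forall a b c (g : Hom b c) (f f' : Hom a b),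
    cmp g (f + f') = cmp g f + cmp g f';
  zob : Ob;
  zob_init : forall a (f : Hom zob a), f = 0;
  zob_term : forall a (f : Hom a zob), f = 0;
  bp : Ob -> Ob -> Ob;
  bin1 : forall a b, Hom a (bp a b);
  bin2 : forall a b, Hom b (bp a b);
  bpr1 : forall a b, Hom (bp a b) a;
  bpr2 : forall a b, Hom (bp a b) b;
  bp_11 : forall a b, cmp (bpr1 a b) (bin1 a b) = idm a;
  bp_22 : forall a b, cmp (bpr2 a b) (bin2 a b) = idm b;
  bp_12 : forall a b, cmp (bpr1 a b) (bin2 a b) = 0;
  bp_21 : forall a b, cmp (bpr2 a b) (bin1 a b) = 0;
  bp_id : forall a b, cmp (bin1 a b) (bpr1 a b) + cmp (bin2 a b) (bpr2 a b)
                      = idm (bp a b)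
}.
Arguments Hom : clear implicits.
Arguments cmp {_ a b c} _ _.
Arguments idm {_}.
Arguments zob {_}.
Arguments bp {_}.
Arguments bpr1 {_ a b}.
Arguments bpr2 {_ a b}.

Section Freyd.
Variable A : addcat.

Definition copair (a b c : Ob A) (f : Hom A a c) (g : Hom A b c) : Hom A (bp a b) c :=
  cmp f bpr1 + cmp g bpr2.

(* Objects of the Freyd category A(A): morphisms rho : r -> a, written (a <- r). *)
Record fobj := FObj { fo : Ob A; fr : Ob A; frho : Hom A fr fo }.

(* A morphism X -> Y of A(A) is represented by  f : fo X -> fo Y  with      *)
(* f o rho_X = rho_Y o w for some w ...                                     *)
Definition fmor (X Y : fobj) (f : Hom A (fo X) (fo Y)) : Prop :=
  exists w : Hom A (fr X) (fr Y), cmp f (frho X) = cmp (frho Y) w.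
(* ... modulo those of the form rho_Y o l: equality in A(A)(X,Y).          *)
Definition feq (X Y : fobj) (f g : Hom A (fo X) (fo Y)) : Prop :=
  exists l : Hom A (fo X) (fr Y), f - g = cmp (frho Y) l.

Definition emb (a : Ob A) : fobj := FObj (0 : Hom A zob a).

End Freyd.
Arguments fmor {A}.
Arguments feq {A}.
Arguments emb {A}.

(* T : A x A -> A(A) bilinear; its action on morphisms is given by        *)
(* representatives Tm f g : fo (T a b) -> fo (T a' b').                   *)
Record promon_data (A : addcat) := PromonData {
  T : Ob A -> Ob A -> fobj A;
  Tm : forall a a' b b', Hom A a a' -> Hom A b b' -> Hom A (fo (T a b)) (fo (T a' b'));
  one : fobj A;
  Ass : forall a b c, Hom A (fo (T a (fo (T b c)))) (fo (T (fo (T a b)) c));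
  Assi : forall a b c, Hom A (fo (T (fo (T a b)) c)) (fo (T a (fo (T b c))));
  lam : forall a, Hom A (fo (T (fo one) a)) a;
  lami : forall a, Hom A a (fo (T (fo one) a));
  rho : forall a, Hom A (fo (T a (fo one))) a;
  rhoi : forall a, Hom A a (fo (T a (fo one)))
}.
Arguments Tm {A} _ {a a' b b'}.
Arguments T {A} _.
Arguments one {A} _.
Arguments Ass {A} _.
Arguments Assi {A} _.
Arguments lam {A} _.
Arguments lami {A} _.
Arguments rho {A} _.
Arguments rhoi {A} _.

Section Hat.
Variables (A : addcat) (P : promon_data A).
Local Notation T := (T P).
Local Notation Tm := (Tm P).

(* The right exact extension  X (x) Y := \hat T (X, Y)
   = cok( T(x, r_Y) (+) T(r_X, y) -> T(x, y) )  computed in A(A) with the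
   standard cokernel of A(A):  cok (phi : Z -> W) = (w <- r_W (+) z). *)
Definition hT (X Y : fobj A) : fobj A :=
  FObj (copair (frho (T (fo X) (fo Y)))
          (copair (Tm (idm (fo X)) (frho Y)) (Tm (frho X) (idm (fo Y))))).

Definition hTm (X X' Y Y' : fobj A) (f : Hom A (fo X) (fo X')) (g : Hom A (fo Y) (fo Y'))
  : Hom A (fo (hT X Y)) (fo (hT X' Y')) := Tm f g.
Arguments hTm : clear implicits.

(* extensions of the structure maps: the unique natural transformations of
   the right exact extensions restricting to the given ones; concretely they
   are represented by the same morphisms of A on underlying objects.     *)
Definition hAss (X Y Z : fobj A)
  : Hom A (fo (hT X (hT Y Z))) (fo (hT (hT X Y) Z)) := Ass P (fo X) (fo Y) (fo Z).
Definition hAssi (X Y Z : fobj A)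
  : Hom A (fo (hT (hT X Y) Z)) (fo (hT X (hT Y Z))) := Assi P (fo X) (fo Y) (fo Z).
Definition hlam (X : fobj A) : Hom A (fo (hT (one P) X)) (fo X) := lam P (fo X).
Definition hrho (X : fobj A) : Hom A (fo (hT X (one P))) (fo X) := rho P (fo X).

Definition is_fp_promonoidal : Prop :=
  [/\ (forall a a' b b' (f : Hom A a a') (g : Hom A b b'), fmor (T a b) (T a' b') (Tm f g)),
      (forall a b, feq (T a b) (T a b) (Tm (idm a) (idm b)) (idm _)),
      (forall a a' a'' b b' b'' (f : Hom A a a') (f' : Hom A a' a'')
              (g : Hom A b b') (g' : Hom A b' b''),
          feq (T a b) (T a'' b'') (Tm (cmp f' f) (cmp g' g)) (cmp (Tm f' g') (Tm f g))),
      (forall a a' b b' (f f' : Hom A a a') (g : Hom A b b'),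
          feq (T a b) (T a' b') (Tm (f + f') g) (Tm f g + Tm f' g)) &
      (forall a a' b b' (f : Hom A a a') (g g' : Hom A b b'),
          feq (T a b) (T a' b') (Tm f (g + g')) (Tm f g + Tm f g'))]
  /\
  [/\ (forall a b c, fmor (hT (emb a) (T b c)) (hT (T a b) (emb c)) (Ass P a b c)),
      (forall a b c, fmor (hT (T a b) (emb c)) (hT (emb a) (T b c)) (Assi P a b c)),
      (forall a b c, feq (hT (emb a) (T b c)) (hT (emb a) (T b c))
                         (cmp (Assi P a b c) (Ass P a b c)) (idm _)),
      (forall a b c, feq (hT (T a b) (emb c)) (hT (T a b) (emb c))
                         (cmp (Ass P a b c) (Assi P a b c)) (idm _)) &
      (forall a a' b b' c c' (f : Hom A a a') (g : Hom A b b') (h : Hom A c c'),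
          feq (hT (emb a) (T b c)) (hT (T a' b') (emb c'))
              (cmp (Ass P a' b' c') (Tm f (Tm g h)))
              (cmp (Tm (Tm f g) h) (Ass P a b c)))]
  /\
  [/\ (forall a, fmor (hT (one P) (emb a)) (emb a) (lam P a)),
      (forall a, fmor (emb a) (hT (one P) (emb a)) (lami P a)),
      (forall a, feq (hT (one P) (emb a)) (hT (one P) (emb a))
                     (cmp (lami P a) (lam P a)) (idm _)),
      (forall a, feq (emb a) (emb a) (cmp (lam P a) (lami P a)) (idm _)) &
      (forall a a' (f : Hom A a a'),
          feq (hT (one P) (emb a)) (emb a')
              (cmp (lam P a') (Tm (idm (fo (one P))) f)) (cmp f (lam P a)))]
  /\
  [/\ (forall a, fmor (hT (emb a) (one P)) (emb a) (rho P a)),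
      (forall a, fmor (emb a) (hT (emb a) (one P)) (rhoi P a)),
      (forall a, feq (hT (emb a) (one P)) (hT (emb a) (one P))
                     (cmp (rhoi P a) (rho P a)) (idm _)),
      (forall a, feq (emb a) (emb a) (cmp (rho P a) (rhoi P a)) (idm _)) &
      (forall a a' (f : Hom A a a'),
          feq (hT (emb a) (one P)) (emb a')
              (cmp (rho P a') (Tm f (idm (fo (one P))))) (cmp f (rho P a)))]
  /\
  (forall a b c d,
     let A' := emb a in let B := emb b in let C := emb c in let D := emb d in
     feq (hT A' (hT B (hT C D))) (hT (hT (hT A' B) C) D)
       (cmp (hAss (hT A' B) C D) (hAss A' B (hT C D)))
       (cmp (hTm (hT A' (hT B C)) (hT (hT A' B) C) D D (hAss A' B C) (idm (fo D)))
          (cmp (hAss A' (hT B C) D)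
             (hTm A' A' (hT B (hT C D)) (hT (hT B C) D) (idm (fo A')) (hAss B C D)))))
  /\
  (forall a b,
     let A' := emb a in let B := emb b in
     feq (hT A' (hT (one P) B)) (hT A' B)
       (cmp (hTm (hT A' (one P)) A' B B (hrho A') (idm (fo B))) (hAss A' (one P) B))
       (hTm A' A' (hT (one P) B) B (idm (fo A')) (hlam B))).

Definition is_nat_iso_braid
  (Br : forall a b, Hom A (fo (T a b)) (fo (T b a)))
  (Bri : forall a b, Hom A (fo (T b a)) (fo (T a b))) : Prop :=
  [/\ (forall a b, fmor (hT (emb a) (emb b)) (hT (emb b) (emb a)) (Br a b)),
      (forall a b, fmor (hT (emb b) (emb a)) (hT (emb a) (emb b)) (Bri a b)),
      (forall a b, feq (hT (emb a) (emb b)) (hT (emb a) (emb b))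
                       (cmp (Bri a b) (Br a b)) (idm _)),
      (forall a b, feq (hT (emb b) (emb a)) (hT (emb b) (emb a))
                       (cmp (Br a b) (Bri a b)) (idm _)) &
      (forall a a' b b' (f : Hom A a a') (g : Hom A b b'),
          feq (hT (emb a) (emb b)) (hT (emb b') (emb a'))
              (cmp (Br a' b') (Tm f g)) (cmp (Tm g f) (Br a b)))].

Section Braid.
Variables (Br : forall a b, Hom A (fo (T a b)) (fo (T b a)))
          (Bri : forall a b, Hom A (fo (T b a)) (fo (T a b))).

Definition hBr (X Y : fobj A) : Hom A (fo (hT X Y)) (fo (hT Y X)) := Br (fo X) (fo Y).
Definition hBri (X Y : fobj A) : Hom A (fo (hT Y X)) (fo (hT X Y)) := Bri (fo X) (fo Y).

Definition braid_eqs (X Y Z : fobj A) : Prop :=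
  [/\
      feq (hT X (one P)) X (cmp (hlam X) (hBr X (one P))) (hrho X),
      feq (hT (hT X Y) Z) (hT (hT X Z) Y)
        (cmp (hTm (hT Z X) (hT X Z) Y Y (hBr Z X) (idm (fo Y)))
           (cmp (hAss Z X Y) (hBr (hT X Y) Z)))
        (cmp (hAss X Z Y)
           (cmp (hTm X X (hT Y Z) (hT Z Y) (idm (fo X)) (hBr Y Z)) (hAssi X Y Z))) &
      feq (hT X (hT Y Z)) (hT Y (hT X Z))
        (cmp (hTm Y Y (hT Z X) (hT X Z) (idm (fo Y)) (hBr Z X))
           (cmp (hAssi Y Z X) (hBr X (hT Y Z))))
        (cmp (hAssi Y X Z)
           (cmp (hTm (hT X Y) (hT Y X) Z Z (hBr X Y) (idm (fo Z))) (hAss X Y Z)))].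

End Braid.
End Hat.

(* A morphism of A(A) is represented by a morphism of A between the underlying
   objects, two representatives being equal iff their difference factors through
   the relation morphism of the target, and the extended structure maps are
   represented by the original ones.  So each of (i)-(iii) says at X, Y, Z that
   a fixed morphism of A factors through the relations of a tensor expression in
   X, Y, Z, and at x, y, z in A the same for the free objects (x <- 0), (y <- 0),
   (z <- 0).  By functoriality of T the relations of (x <- 0) (x) (y <- 0) factor
   through those of X (x) Y, so the identities pass from A to A(A).  For symmetry,
   Br_{b,a} o Br_{a,b} = id and Br_{a,b} = Br_{b,a}^-1 are interchanged by
   composing with Br_{b,a} or with its inverse, both morphisms of A(A). *)
From Pilot Require Import Defs.
From mathcomp Require Import all_boot ssralg.
Import GRing.Theory.
Local Open Scope ring_scope.
Set Implicit Arguments. Unset Strict Implicit.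

Section AdditiveCategory.
Variable A : addcat.

Lemma comp0r (a b c : Ob A) (g : Hom A b c) : cmp g (0 : Hom A a b) = 0.
Proof. by apply: (addrI (cmp g 0)); rewrite -compDr !addr0. Qed.

Lemma comp0l (a b c : Ob A) (f : Hom A a b) : cmp (0 : Hom A b c) f = 0.
Proof. by apply: (addrI (cmp 0 f)); rewrite -compDl !addr0. Qed.

Lemma compNr (a b c : Ob A) (g : Hom A b c) (f : Hom A a b) :
  cmp g (- f) = - cmp g f.
Proof. by apply: (addrI (cmp g f)); rewrite -compDr !subrr comp0r. Qed.

Lemma compNl (a b c : Ob A) (g : Hom A b c) (f : Hom A a b) :
  cmp (- g) f = - cmp g f.
Proof. by apply: (addrI (cmp g f)); rewrite -compDl !subrr comp0l. Qed.

Lemma compBr (a b c : Ob A) (g : Hom A b c) (f f' : Hom A a b) :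
  cmp g (f - f') = cmp g f - cmp g f'.
Proof. by rewrite compDr compNr. Qed.

Lemma compBl (a b c : Ob A) (g g' : Hom A b c) (f : Hom A a b) :
  cmp (g - g') f = cmp g f - cmp g' f.
Proof. by rewrite compDl compNl. Qed.

Lemma copair_in1 (a b c : Ob A) (f : Hom A a c) (g : Hom A b c) :
  cmp (copair f g) (Defs.bin1 a b) = f.
Proof. by rewrite /copair compDl -!Defs.compA bp_11 bp_21 comp0r addr0 compm1. Qed.

Lemma copair_in2 (a b c : Ob A) (f : Hom A a c) (g : Hom A b c) :
  cmp (copair f g) (Defs.bin2 a b) = g.
Proof. by rewrite /copair compDl -!Defs.compA bp_12 bp_22 comp0r add0r compm1. Qed.

Definition factors_through (a b c : Ob A) (k : Hom A a c) (h : Hom A b c) : Prop :=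
  exists m : Hom A a b, k = cmp h m.

Lemma factors_through_trans (a b b' c : Ob A)
    (k : Hom A a c) (h : Hom A b c) (h' : Hom A b' c) :
  factors_through k h -> factors_through h h' -> factors_through k h'.
Proof. by move=> [m ->] [n ->]; exists (cmp n m); rewrite Defs.compA. Qed.

Lemma factors_through0 (a b c : Ob A) (h : Hom A b c) :
  factors_through (0 : Hom A a c) h.
Proof. by exists 0; rewrite comp0r. Qed.

Lemma factors_throughN (a b c : Ob A) (k : Hom A a c) (h : Hom A b c) :
  factors_through k h -> factors_through (- k) h.
Proof. by move=> [m ->]; exists (- m); rewrite compNr. Qed.

Lemma factors_throughD (a b c : Ob A) (k k' : Hom A a c) (h : Hom A b c) :
  factors_through k h -> factors_through k' h -> factors_through (k + k') h.
Proof. by move=> [m ->] [m' ->]; exists (m + m'); rewrite compDr. Qed.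

Lemma factors_throughM (a a' b c : Ob A)
    (k : Hom A a c) (n : Hom A a' a) (h : Hom A b c) :
  factors_through k h -> factors_through (cmp k n) h.
Proof. by move=> [m ->]; exists (cmp m n); rewrite Defs.compA. Qed.

Lemma factors_through_copair (a a' b c : Ob A)
    (k : Hom A a c) (k' : Hom A a' c) (h : Hom A b c) :
  factors_through k h -> factors_through k' h -> factors_through (copair k k') h.
Proof. by move=> kh k'h; apply: factors_throughD; apply: factors_throughM. Qed.

Lemma factors_through_subr (a b c : Ob A) (k k' : Hom A a c) (h : Hom A b c) :
  factors_through (k - k') h -> factors_through k' h -> factors_through k h.
Proof. by move=> kk' k'h; rewrite -(subrK k' k); apply: factors_throughD. Qed.

End AdditiveCategory.

(* [feq X W f g] unfolds to [factors_through (f - g) (frho W)]. *)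
Section FreydEquality.
Variable A : addcat.
Implicit Types X Y W : fobj A.

Lemma feq_sym X W (f g : Hom A (fo X) (fo W)) : feq X W f g -> feq X W g f.
Proof. by move=> /factors_throughN; rewrite opprB. Qed.

Lemma feq_trans X W (f g h : Hom A (fo X) (fo W)) :
  feq X W f g -> feq X W g h -> feq X W f h.
Proof. by move=> fg gh; rewrite /feq -[f](subrK g) -addrA; apply: factors_throughD. Qed.

Lemma feq_compr X Y W (f f' : Hom A (fo Y) (fo W)) (n : Hom A (fo X) (fo Y)) :
  feq Y W f f' -> feq X W (cmp f n) (cmp f' n).
Proof. by move=> /factors_throughM ff'; rewrite /feq -compBl; exact: ff'. Qed.

Lemma feq_compl X Y W (g : Hom A (fo Y) (fo W)) (f f' : Hom A (fo X) (fo Y)) :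
  fmor Y W g -> feq X Y f f' -> feq X W (cmp g f) (cmp g f').
Proof.
move=> [w gw] [l ff']; exists (cmp w l).
by rewrite -compBr ff' Defs.compA gw Defs.compA.
Qed.

Lemma feq_factors X W r (h : Hom A r (fo W)) (f g : Hom A (fo X) (fo W)) :
  factors_through h (frho W) -> feq X (FObj h) f g -> feq X W f g.
Proof. by move=> hW fg; apply: factors_through_trans fg hW. Qed.

End FreydEquality.

Definition Tm_functorial (A : addcat) (P : promon_data A) : Prop :=
  forall a a' a'' b b' b'' (f : Hom A a a') (f' : Hom A a' a'')
         (g : Hom A b b') (g' : Hom A b' b''),
    feq (T P a b) (T P a'' b'') (Tm P (cmp f' f) (cmp g' g)) (cmp (Tm P f' g') (Tm P f g)).

Section TensorRelations.
Variables (A : addcat) (P : promon_data A).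
Hypothesis Tm_comp : Tm_functorial P.
Implicit Types U V : fobj A.

Lemma frho_T_factors U V :
  factors_through (frho (T P (fo U) (fo V))) (frho (hT P U V)).
Proof. by exists (Defs.bin1 _ _); rewrite /= copair_in1. Qed.

Lemma Tm_frhor_factors U V :
  factors_through (Tm P (idm (fo U)) (frho V)) (frho (hT P U V)).
Proof.
exists (cmp (Defs.bin2 _ _) (Defs.bin1 _ _)).
by rewrite /= Defs.compA copair_in2 copair_in1.
Qed.

Lemma Tm_frhol_factors U V :
  factors_through (Tm P (frho U) (idm (fo V))) (frho (hT P U V)).
Proof.
by exists (cmp (Defs.bin2 _ _) (Defs.bin2 _ _)); rewrite /= Defs.compA !copair_in2.
Qed.

(* Modulo the relations of T(u, v), Tm id (rho_V o m) = Tm id rho_V o Tm id m. *)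
Lemma Tm_frhor_comp_factors U V s (m : Hom A s (fr V)) :
  factors_through (Tm P (idm (fo U)) (cmp (frho V) m)) (frho (hT P U V)).
Proof.
have := Tm_comp (idm (fo U)) (idm _) m (frho V); rewrite comp1m => E.
apply: factors_through_subr (factors_through_trans E (frho_T_factors U V)) _.
exact/factors_throughM/Tm_frhor_factors.
Qed.

Lemma Tm_frhol_comp_factors U V s (m : Hom A s (fr U)) :
  factors_through (Tm P (cmp (frho U) m) (idm (fo V))) (frho (hT P U V)).
Proof.
have := Tm_comp m (frho U) (idm (fo V)) (idm _); rewrite comp1m => E.
apply: factors_through_subr (factors_through_trans E (frho_T_factors U V)) _.
exact/factors_throughM/Tm_frhol_factors.
Qed.

Lemma frho_hT_factors U V r1 r2 (h1 : Hom A r1 (fo U)) (h2 : Hom A r2 (fo V)) :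
  factors_through h1 (frho U) -> factors_through h2 (frho V) ->
  factors_through (frho (hT P (FObj h1) (FObj h2))) (frho (hT P U V)).
Proof.
move=> [m1 ->] [m2 ->] /=.
apply: factors_through_copair; first exact: frho_T_factors.
apply: factors_through_copair.
- exact: Tm_frhor_comp_factors.
- exact: Tm_frhol_comp_factors.
Qed.

End TensorRelations.

Theorem lemma3p19 (A : addcat) (P : promon_data A)
  (HP : is_fp_promonoidal P)
  (Br : forall a b, Hom A (fo (T P a b)) (fo (T P b a)))
  (Bri : forall a b, Hom A (fo (T P b a)) (fo (T P a b)))
  (HBr : is_nat_iso_braid Br Bri) :
  ((forall X Y Z : fobj A, braid_eqs Br X Y Z) <->
   (forall a b c : Ob A, braid_eqs Br (emb a) (emb b) (emb c)))
  /\
  ((forall X Y : fobj A,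
      feq (hT P X Y) (hT P Y X) (hBr Br X Y) (hBri Bri Y X)) <->
   (forall a b : Ob A,
      feq (hT P (emb a) (emb b)) (hT P (emb a) (emb b))
          (cmp (Br b a) (Br a b)) (idm _))).
Proof.
have Tm_comp : Tm_functorial P by case: HP => -[_ _ Tm_comp _ _] _.
have emb_factors (X : fobj A) := factors_through0 (zob : Ob A) (frho X).
have [Br_mor Bri_mor BriBr BrBri _] := HBr.
split; split.
- by move=> braid a b c; apply: braid.
- move=> braid X Y Z; have [i ii iii] := braid (fo X) (fo Y) (fo Z); split.
  + exact: feq_factors (emb_factors X) i.
  + have XZ := frho_hT_factors Tm_comp (emb_factors X) (emb_factors Z).
    exact: feq_factors (frho_hT_factors Tm_comp XZ (emb_factors Y)) ii.
  + have XZ := frho_hT_factors Tm_comp (emb_factors X) (emb_factors Z).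
    exact: feq_factors (frho_hT_factors Tm_comp (emb_factors Y) XZ) iii.
- move=> sym a b.
  exact: feq_trans (feq_compl (Br_mor b a) (sym (emb a) (emb b))) (BrBri b a).
- move=> sym X Y.
  apply: feq_factors (frho_hT_factors Tm_comp (emb_factors Y) (emb_factors X)) _.
  have := feq_compr (Br (fo X) (fo Y)) (BriBr (fo Y) (fo X)).
  rewrite comp1m -Defs.compA => /feq_sym E; apply: feq_trans E _.
  by have := feq_compl (Bri_mor (fo Y) (fo X)) (sym (fo X) (fo Y)); rewrite compm1.
Qed.
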